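(* For metric formulas $\varphi,\psi$, over strict timed traces, and for $m,n$ with $m>0$, the following hold in MHT: $\varphi\,\mathsf{U}_{[m,n)}\,\psi\equiv\Diamond_{[m,n)}\psi\wedge\Box_{[0,m)}(\varphi\,\mathsf{U}\,(\varphi\wedge\bigcirc\psi))$; $\varphi\,\mathsf{U}_{[m,n]}\,\psi\equiv\Diamond_{[m,n]}\psi\wedge\Box_{[0,m)}(\varphi\,\mathsf{U}\,(\varphi\wedge\bigcirc\psi))$; $\varphi\,\mathsf{U}_{(m,n)}\,\psi\equiv\Diamond_{(m,n)}\psi\wedge\Box_{[0,m]}(\varphi\,\mathsf{U}\,(\varphi\wedge\bigcirc\psi))$; $\varphi\,\mathsf{U}_{(m,n]}\,\psi\equiv\Diamond_{(m,n]}\psi\wedge\Box_{[0,m]}(\varphi\,\mathsf{U}\,(\varphi\wedge\bigcirc\psi))$; $\varphi\,\mathsf{U}_{[0,n)}\,\psi\equiv\Diamond_{[0,n)}\psi\wedge\varphi\,\mathsf{U}\,\psi$; $\varphi\,\mathsf{U}_{[0,n]}\,\psi\equiv\Diamond_{[0,n]}\psi\wedge\varphi\,\mathsf{U}\,\psi$; $\varphi\,\mathsf{U}_{(0,n)}\,\psi\equiv\Diamond_{(0,n)}\psi\wedge\varphi\,\mathsf{U}\,(\varphi\wedge\bigcirc\psi)$; $\varphi\,\mathsf{U}_{(0,n]}\,\psi\equiv\Diamond_{(0,n]}\psi\wedge\varphi\,\mathsf{U}\,(\varphi\wedge\bigcirc\psi)$; $\varphi\,\mathsf{R}_{[m,n)}\,\psi\equiv\Box_{[m,n)}\psi\vee\Diamond_{[0,m)}(\varphi\,\mathsf{R}\,(\varphi\vee\widehat{\bigcirc}\psi))$;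 $\varphi\,\mathsf{R}_{[m,n]}\,\psi\equiv\Box_{[m,n]}\psi\vee\Diamond_{[0,m)}(\varphi\,\mathsf{R}\,(\varphi\vee\widehat{\bigcirc}\psi))$; $\varphi\,\mathsf{R}_{(m,n)}\,\psi\equiv\Box_{(m,n)}\psi\vee\Diamond_{[0,m]}(\varphi\,\mathsf{R}\,(\varphi\vee\widehat{\bigcirc}\psi))$; $\varphi\,\mathsf{R}_{(m,n]}\,\psi\equiv\Box_{(m,n]}\psi\vee\Diamond_{[0,m]}(\varphi\,\mathsf{R}\,(\varphi\vee\widehat{\bigcirc}\psi))$; $\varphi\,\mathsf{R}_{[0,n)}\,\psi\equiv\Box_{[0,n)}\psi\vee\varphi\,\mathsf{R}\,\psi$; $\varphi\,\mathsf{R}_{[0,n]}\,\psi\equiv\Box_{[0,n]}\psi\vee\varphi\,\mathsf{R}\,\psi$; $\varphi\,\mathsf{R}_{(0,n)}\,\psi\equiv\Box_{(0,n)}\psi\vee\varphi\,\mathsf{R}\,(\varphi\vee\widehat{\bigcirc}\psi)$; $\varphi\,\mathsf{R}_{(0,n]}\,\psi\equiv\Box_{(0,n]}\psi\vee\varphi\,\mathsf{R}\,(\varphi\vee\widehat{\bigcirc}\psi)$; $\varphi\,\mathsf{S}_{[m,n)}\,\psi\equiv(\top\,\mathsf{S}_{[m,n)}\,\psi)\wedge\blacksquare_{[0,m)}(\varphi\,\mathsf{S}\,(\varphi\wedge\bullet\psi))$; $\varphi\,\mathsf{S}_{[m,n]}\,\psi\equiv(\top\,\mathsf{S}_{[m,n]}\,\psi)\wedge\blacksquare_{[0,m)}(\varphi\,\mathsf{S}\,(\varphi\wedge\bullet\psi))$;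 $\varphi\,\mathsf{S}_{(m,n)}\,\psi\equiv(\top\,\mathsf{S}_{(m,n)}\,\psi)\wedge\blacksquare_{[0,m]}(\varphi\,\mathsf{S}\,(\varphi\wedge\bullet\psi))$; $\varphi\,\mathsf{S}_{(m,n]}\,\psi\equiv(\top\,\mathsf{S}_{(m,n]}\,\psi)\wedge\blacksquare_{[0,m]}(\varphi\,\mathsf{S}\,(\varphi\wedge\bullet\psi))$; $\varphi\,\mathsf{S}_{[0,n)}\,\psi\equiv(\top\,\mathsf{S}_{[0,n)}\,\psi)\wedge\varphi\,\mathsf{S}\,\psi$; $\varphi\,\mathsf{S}_{[0,n]}\,\psi\equiv(\top\,\mathsf{S}_{[0,n]}\,\psi)\wedge\varphi\,\mathsf{S}\,\psi$; $\varphi\,\mathsf{S}_{(0,n)}\,\psi\equiv(\top\,\mathsf{S}_{(0,n)}\,\psi)\wedge\varphi\,\mathsf{S}\,(\varphi\wedge\bullet\psi)$; $\varphi\,\mathsf{S}_{(0,n]}\,\psi\equiv(\top\,\mathsf{S}_{(0,n]}\,\psi)\wedge\varphi\,\mathsf{S}\,(\varphi\wedge\bullet\psi)$; $\varphi\,\mathsf{T}_{[m,n)}\,\psi\equiv\blacksquare_{[m,n)}\psi\vee(\top\,\mathsf{S}_{[0,m)}\,(\varphi\,\mathsf{T}\,(\varphi\vee\widehat{\bullet}\psi)))$; $\varphi\,\mathsf{T}_{[m,n]}\,\psi\equiv\blacksquare_{[m,n]}\psi\vee(\top\,\mathsf{S}_{[0,m)}\,(\varphi\,\mathsf{T}\,(\varphi\vee\widehat{\bullet}\psi)))$;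 $\varphi\,\mathsf{T}_{(m,n)}\,\psi\equiv\blacksquare_{(m,n)}\psi\vee(\top\,\mathsf{S}_{[0,m]}\,(\varphi\,\mathsf{T}\,(\varphi\vee\widehat{\bullet}\psi)))$; $\varphi\,\mathsf{T}_{(m,n]}\,\psi\equiv\blacksquare_{(m,n]}\psi\vee(\top\,\mathsf{S}_{[0,m]}\,(\varphi\,\mathsf{T}\,(\varphi\vee\widehat{\bullet}\psi)))$; $\varphi\,\mathsf{T}_{[0,n)}\,\psi\equiv\blacksquare_{[0,n)}\psi\vee\varphi\,\mathsf{T}\,\psi$; $\varphi\,\mathsf{T}_{[0,n]}\,\psi\equiv\blacksquare_{[0,n]}\psi\vee\varphi\,\mathsf{T}\,\psi$; $\varphi\,\mathsf{T}_{(0,n)}\,\psi\equiv\blacksquare_{(0,n)}\psi\vee\varphi\,\mathsf{T}\,(\varphi\vee\widehat{\bullet}\psi)$; $\varphi\,\mathsf{T}_{(0,n]}\,\psi\equiv\blacksquare_{(0,n]}\psi\vee\varphi\,\mathsf{T}\,(\varphi\vee\widehat{\bullet}\psi)$.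
   Context: Metric formulas over $\mathcal{A}$: $\varphi ::= p \mid \bot \mid \varphi_1\otimes\varphi_2 \mid \bullet_I\varphi \mid \varphi_1\,\mathsf{S}_I\,\varphi_2 \mid \varphi_1\,\mathsf{T}_I\,\varphi_2 \mid \bigcirc_I\varphi \mid \varphi_1\,\mathsf{U}_I\,\varphi_2 \mid \varphi_1\,\mathsf{R}_I\,\varphi_2$, $\otimes\in\{\to,\wedge,\vee\}$; intervals are sets of naturals ($[m,n)$, $[m,n]$, $(m,n)$, $(m,n]$ with the usual meaning); an omitted subscript means $[0,\omega)$. Derived: $\neg\varphi=\varphi\to\bot$, $\top=\neg\bot$, $\blacksquare_I\varphi=\bot\,\mathsf{T}_I\,\varphi$, $\top\,\mathsf{S}_I\,\varphi$ (eventually before), $\widehat{\bullet}_I\varphi=\bullet_I\varphi\vee\neg\bullet_I\top$, $\Box_I\varphi=\bot\,\mathsf{R}_I\,\varphi$, $\Diamond_I\varphi=\top\,\mathsf{U}_I\,\varphi$, $\widehat{\bigcirc}_I\varphi=\bigcirc_I\varphi\vee\neg\bigcirc_I\top$. Timed HT-trace $\mathbf{M}=(\langle\mathbf{H},\mathbf{T}\rangle,\tau)$ of length $\lambda$: $H_i\subseteq T_i\subseteq\mathcal{A}$, $\tau:[0,\lambda)\to\mathbb{N}$, $\tau(0)=0$; strict: $\tau(i)<\tau(i+1)$ whenever $i+1<\lambda$. Satisfaction at $k$: $\bot$ never; $p$ iff $p\in H_k$; $\wedge,\vee$ usual; $\varphi\to\psi$ iff for both $\mathbf{M}'=\mathbf{M}$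 and $\mathbf{M}'=(\langle\mathbf{T},\mathbf{T}\rangle,\tau)$, $\mathbf{M}',k\not\models\varphi$ or $\mathbf{M}',k\models\psi$; $\bullet_I\varphi$: $k>0$, $\varphi$ at $k-1$, $\tau(k)-\tau(k-1)\in I$; $\varphi\,\mathsf{S}_I\,\psi$: some $j\in[0,k]$ with $\tau(k)-\tau(j)\in I$, $\psi$ at $j$, $\varphi$ at all $i\in(j,k]$; $\varphi\,\mathsf{T}_I\,\psi$: for all such $j$, $\psi$ at $j$ or $\varphi$ at some $i\in(j,k]$; $\bigcirc_I\varphi$: $k+1<\lambda$, $\varphi$ at $k+1$, $\tau(k+1)-\tau(k)\in I$; $\varphi\,\mathsf{U}_I\,\psi$: some $j\in[k,\lambda)$ with $\tau(j)-\tau(k)\in I$, $\psi$ at $j$, $\varphi$ at all $i\in[k,j)$; $\varphi\,\mathsf{R}_I\,\psi$: for all such $j$, $\psi$ at $j$ or $\varphi$ at some $i\in[k,j)$. $\equiv$ means $\mathbf{M},k\models\varphi\leftrightarrow\psi$ for all strict timed HT-traces $\mathbf{M}$ and all $k$. *)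

From Stdlib Require Import Arith Lia.

Set Implicit Arguments.

Record interval := Itv {
  lo : nat;
  lo_closed : bool;  (* true: [m,  false: (m *)
  hi : option nat;   (* upper bound n; None = omega *)
  hi_closed : bool   (* true: n],  false: n) ; ignored when hi = None *)
}.

Definition in_itv (I : interval) (d : nat) : Prop :=
  (if lo_closed I then lo I <= d else lo I < d) /\
  match hi I with
  | None => True
  | Some n => if hi_closed I then d <= n else d < n
  end.

Definition itv_co (m n : nat) := Itv m true (Some n) false.
Definition itv_cc (m n : nat) := Itv m true (Some n) true.
Definition itv_oo (m n : nat) := Itv m false (Some n) false.
Definition itv_oc (m n : nat) := Itv m false (Some n) true.
Definition itv_all := Itv 0 true None false.

Inductive formula (A : Type) :=
| Atom : A -> formula A
| Bot : formula A
| Impl : formula A -> formula A -> formula A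
| And : formula A -> formula A -> formula A
| Or : formula A -> formula A -> formula A
| Prev : interval -> formula A -> formula A
| Since : interval -> formula A -> formula A -> formula A
| Trigger : interval -> formula A -> formula A -> formula A
| Next : interval -> formula A -> formula A
| Until : interval -> formula A -> formula A -> formula A
| Release : interval -> formula A -> formula A -> formula A.

Arguments Bot {A}.

Definition Neg {A} (f : formula A) := Impl f Bot.
Definition Top {A} : formula A := Neg Bot.
Definition Iff {A} (f g : formula A) := And (Impl f g) (Impl g f).
Definition AlwaysBefore {A} I (f : formula A) := Trigger I Bot f.
Definition EventuallyBefore {A} I (f : formula A) := Since I Top f.
Definition WPrev {A} I (f : formula A) := Or (Prev I f) (Neg (Prev I Top)).
Definition Always {A} I (f : formula A) := Release I Bot f.
Definition Eventually {A} I (f : formula A) := Until I Top f.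
Definition WNext {A} I (f : formula A) := Or (Next I f) (Neg (Next I Top)).

(* Timed HT-traces; length None = omega. *)
Record trace (A : Type) := Trace {
  len : option nat;
  Hs : nat -> A -> Prop;
  Ts : nat -> A -> Prop;
  tau : nat -> nat
}.

Definition in_len {A} (M : trace A) (i : nat) : Prop :=
  match len M with None => True | Some l => i < l end.

Definition strict_trace {A} (M : trace A) : Prop :=
  (forall i, in_len M i -> forall p, Hs M i p -> Ts M i p) /\
  tau M 0 = 0 /\
  (forall i, in_len M (S i) -> tau M i < tau M (S i)).

(* Satisfaction; here = true evaluates atoms in H (the trace <H,T>),
   here = false evaluates atoms in T (the trace <T,T>). *)
Fixpoint sat {A} (here : bool) (M : trace A) (k : nat) (f : formula A) : Prop :=
  match f with
  | Atom p => if here then Hs M k p else Ts M k p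
  | Bot => False
  | Impl f g =>
      (~ sat here M k f \/ sat here M k g) /\
      (~ sat false M k f \/ sat false M k g)
  | And f g => sat here M k f /\ sat here M k g
  | Or f g => sat here M k f \/ sat here M k g
  | Prev J f => 0 < k /\ sat here M (k - 1) f /\ in_itv J (tau M k - tau M (k - 1))
  | Since J f g => exists j, j <= k /\ in_itv J (tau M k - tau M j) /\
       sat here M j g /\ (forall i, j < i <= k -> sat here M i f)
  | Trigger J f g => forall j, j <= k -> in_itv J (tau M k - tau M j) ->
       sat here M j g \/ (exists i, j < i <= k /\ sat here M i f)
  | Next J f => in_len M (S k) /\ sat here M (S k) f /\ in_itv J (tau M (S k) - tau M k)
  | Until J f g => exists j, k <= j /\ in_len M j /\ in_itv J (tau M j - tau M k) /\
       sat here M j g /\ (forall i, k <= i < j -> sat here M i f)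
  | Release J f g => forall j, k <= j -> in_len M j -> in_itv J (tau M j - tau M k) ->
       sat here M j g \/ (exists i, k <= i < j /\ sat here M i f)
  end.

Definition mht_equiv {A} (f g : formula A) : Prop :=
  forall M : trace A, strict_trace M -> forall k, in_len M k -> sat true M k (Iff f g).

From Stdlib Require Import Arith Lia Classical.

(* In a fixed world (here or there) each formula of the statement is
   evaluated compositionally from the predicates "phi holds at i" and "psi
   holds at i", so every equivalence is a fact about arbitrary predicates
   P, Q on a trace with strictly increasing time stamps.

   Let B be the set of delays below the interval I.  If Q holds at some delay
   in I and P U (P /\ X Q) holds at every position whose delay lies in B,
   start at the current position and repeatedly jump to the successor of the
   witness of P U (P /\ X Q).  P holds all along, and one either passes the
   Q-position, which is then a witness, or reaches a delay outside B, which
   lies in I since I is an initial segment of the complement of B.  An open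
   lower bound 0 is the case B = {0}.  Release is the classical dual of
   until, and the past operators are the future ones on the time-reversed
   prefix of the trace. *)

Definition tau_increasing {A} (M : trace A) : Prop :=
  forall i, in_len M (S i) -> tau M i < tau M (S i).

Lemma strict_trace_tau_increasing {A} (M : trace A) :
  strict_trace M -> tau_increasing M.
Proof. intros (_ & _ & H); exact H. Qed.

Definition lower_set (B : nat -> Prop) : Prop :=
  forall d d', d <= d' -> B d' -> B d.

Definition adjoins (B I : nat -> Prop) : Prop :=
  (forall d, I d -> ~ B d) /\ (forall d d', ~ B d -> d <= d' -> I d' -> I d).

Lemma in_itv_all d : in_itv itv_all d.
Proof. unfold in_itv; cbn; split; [lia | exact I]. Qed.

Section Operators.
Context {A : Type} (M : trace A).

Definition until_at (I : nat -> Prop) (P Q : nat -> Prop) (k : nat) : Prop :=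
  exists j, k <= j /\ in_len M j /\ I (tau M j - tau M k) /\ Q j /\
    (forall i, k <= i < j -> P i).

Definition release_at (I : nat -> Prop) (P Q : nat -> Prop) (k : nat) : Prop :=
  forall j, k <= j -> in_len M j -> I (tau M j - tau M k) ->
    Q j \/ (exists i, k <= i < j /\ P i).

Definition since_at (I : nat -> Prop) (P Q : nat -> Prop) (k : nat) : Prop :=
  exists j, j <= k /\ I (tau M k - tau M j) /\ Q j /\
    (forall i, j < i <= k -> P i).

Definition trigger_at (I : nat -> Prop) (P Q : nat -> Prop) (k : nat) : Prop :=
  forall j, j <= k -> I (tau M k - tau M j) ->
    Q j \/ (exists i, j < i <= k /\ P i).

Definition eventually_at (I Q : nat -> Prop) : nat -> Prop :=
  until_at I (fun _ => True) Q.
Definition always_at (I Q : nat -> Prop) : nat -> Prop :=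
  release_at I (fun _ => False) Q.
Definition once_at (I Q : nat -> Prop) : nat -> Prop :=
  since_at I (fun _ => True) Q.
Definition historically_at (I Q : nat -> Prop) : nat -> Prop :=
  trigger_at I (fun _ => False) Q.

Definition and_next (P Q : nat -> Prop) (l : nat) : Prop :=
  P l /\ in_len M (S l) /\ Q (S l).
Definition or_wnext (P Q : nat -> Prop) (l : nat) : Prop :=
  P l \/ (in_len M (S l) -> Q (S l)).

End Operators.

Definition and_prev (P Q : nat -> Prop) (l : nat) : Prop :=
  P l /\ 0 < l /\ Q (l - 1).
Definition or_wprev (P Q : nat -> Prop) (l : nat) : Prop :=
  P l \/ (0 < l -> Q (l - 1)).

Section Timeline.
Context {A : Type} (M : trace A).

Lemma in_len_le i j : in_len M j -> i <= j -> in_len M i.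
Proof. unfold in_len; destruct (len M); lia. Qed.

Lemma until_at_ext I P P' Q Q' k :
  (forall i, in_len M i -> (P i <-> P' i)) ->
  (forall i, in_len M i -> (Q i <-> Q' i)) ->
  (until_at M I P Q k <-> until_at M I P' Q' k).
Proof.
  intros HP HQ.
  assert (HPj : forall j, in_len M j -> forall i, k <= i < j -> (P i <-> P' i))
    by (intros j Lj i Hi; apply HP, (in_len_le i j); auto; lia).
  split; intros (j & Hkj & Lj & Ij & Qj & Pj); exists j;
    repeat split; auto; try (apply (HQ j Lj); exact Qj);
    intros i Hi; apply (HPj j Lj i Hi); auto.
Qed.

Lemma release_at_ext I P P' Q Q' k :
  (forall i, in_len M i -> (P i <-> P' i)) ->
  (forall i, in_len M i -> (Q i <-> Q' i)) ->
  (release_at M I P Q k <-> release_at M I P' Q' k).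
Proof.
  intros HP HQ.
  assert (HPj : forall j, in_len M j -> forall i, k <= i < j -> (P i <-> P' i))
    by (intros j Lj i Hi; apply HP, (in_len_le i j); auto; lia).
  split; intros H j Hkj Lj Ij; destruct (H j Hkj Lj Ij) as [Qj | (i & Hi & Pi)].
  - left; now apply (HQ j Lj).
  - right; exists i; split; [exact Hi | now apply (HPj j Lj i Hi)].
  - left; now apply (HQ j Lj).
  - right; exists i; split; [exact Hi | now apply (HPj j Lj i Hi)].
Qed.

Lemma always_at_ext I X Y k :
  (forall j, in_len M j -> (X j <-> Y j)) ->
  (always_at M I X k <-> always_at M I Y k).
Proof. intro HXY; apply release_at_ext; tauto. Qed.

Lemma eventually_at_ext I X Y k :
  (forall j, in_len M j -> (X j <-> Y j)) ->
  (eventually_at M I X k <-> eventually_at M I Y k).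
Proof. intro HXY; apply until_at_ext; tauto. Qed.

Lemma since_at_ext I P P' Q Q' k :
  (forall i, P i <-> P' i) -> (forall i, Q i <-> Q' i) ->
  (since_at M I P Q k <-> since_at M I P' Q' k).
Proof.
  intros HP HQ.
  split; intros (j & Hjk & Ij & Qj & Pj); exists j;
    repeat split; auto; try apply HQ; auto; intros i Hi; apply HP; auto.
Qed.

Lemma trigger_at_ext I P P' Q Q' k :
  (forall i, P i <-> P' i) -> (forall i, Q i <-> Q' i) ->
  (trigger_at M I P Q k <-> trigger_at M I P' Q' k).
Proof.
  intros HP HQ.
  split; intros H j Hjk Ij; destruct (H j Hjk Ij) as [Qj | (i & Hi & Pi)].
  - left; now apply HQ.
  - right; exists i; split; [exact Hi | now apply HP].
  - left; now apply HQ.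
  - right; exists i; split; [exact Hi | now apply HP].
Qed.

Lemma release_not_until I P Q k :
  release_at M I P Q k <-> ~ until_at M I (fun i => ~ P i) (fun i => ~ Q i) k.
Proof.
  split.
  - intros H (j & Hkj & Lj & Ij & nQj & nPj).
    destruct (H j Hkj Lj Ij) as [Qj | (i & Hi & Pi)]; [exact (nQj Qj) |].
    exact (nPj i Hi Pi).
  - intros H j Hkj Lj Ij.
    destruct (classic (Q j)) as [Qj | nQj]; [now left | right].
    apply NNPP; intro nP; apply H.
    exists j; repeat split; auto.
    intros i Hi Pi; apply nP; now exists i.
Qed.

Lemma always_not_eventually I Q k :
  always_at M I Q k <-> ~ eventually_at M I (fun i => ~ Q i) k.
Proof.
  unfold always_at, eventually_at; rewrite release_not_until.
  rewrite (until_at_ext I _ (fun _ => True) _ (fun i => ~ Q i)); tauto.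
Qed.

Lemma eventually_not_always I Q k :
  eventually_at M I Q k <-> ~ always_at M I (fun i => ~ Q i) k.
Proof.
  unfold always_at, eventually_at; rewrite release_not_until.
  rewrite (until_at_ext I (fun _ => ~ False) (fun _ => True) _ Q).
  - split; [tauto | apply NNPP].
  - tauto.
  - intros i _; split; [apply NNPP | tauto].
Qed.

Lemma not_release_or_wnext P Q k :
  ~ release_at M (in_itv itv_all) P (or_wnext M P Q) k <->
  until_at M (in_itv itv_all) (fun i => ~ P i)
    (and_next M (fun i => ~ P i) (fun i => ~ Q i)) k.
Proof.
  rewrite release_not_until.
  rewrite (until_at_ext _ _ (fun i => ~ P i) _
             (and_next M (fun i => ~ P i) (fun i => ~ Q i))).
  - split; [apply NNPP | tauto].
  - tauto.
  - intros l _; unfold or_wnext, and_next.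
    destruct (classic (in_len M (S l))); tauto.
Qed.

Hypothesis HM : tau_increasing M.

Lemma tau_lt i j : in_len M j -> i < j -> tau M i < tau M j.
Proof.
  induction j as [| j IH]; intros Lj Hij; [lia |].
  specialize (HM j Lj).
  destruct (Nat.eq_dec i j) as [-> | Hne]; [exact HM |].
  specialize (IH (in_len_le j (S j) Lj (le_S _ _ (le_n j)))); lia.
Qed.

Lemma tau_le i j : in_len M j -> i <= j -> tau M i <= tau M j.
Proof.
  intros Lj Hij; destruct (Nat.eq_dec i j) as [-> | Hne]; [lia |].
  pose proof (tau_lt i j Lj); lia.
Qed.

Lemma always_at_zero X k :
  in_len M k -> always_at M (fun d => d = 0) X k <-> X k.
Proof.
  intro Lk; split.
  - intro H; destruct (H k (le_n k) Lk (Nat.sub_diag _)) as [Xk | (i & Hi & [])].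
    exact Xk.
  - intros Xk j Hkj Lj Hd; left.
    destruct (Nat.eq_dec j k) as [-> | Hne]; [exact Xk |].
    pose proof (tau_lt k j Lj); lia.
Qed.

Section BoundedUntil.
Variables (I B : nat -> Prop).
Hypothesis (B0 : B 0) (HB : lower_set B) (HIB : adjoins B I).

Lemma until_of_always_until P Q k j0 :
  k <= j0 -> in_len M j0 -> I (tau M j0 - tau M k) -> Q j0 ->
  always_at M B (until_at M (in_itv itv_all) P (and_next M P Q)) k ->
  forall i, k <= i <= j0 -> B (tau M i - tau M k) ->
    (forall p, k <= p < i -> P p) -> until_at M I P Q k.
Proof.
  intros Hkj0 Lj0 Ij0 Qj0 Hbox i.
  remember (j0 - i) as r eqn:Hr; revert i Hr.
  induction r as [r IH] using lt_wf_ind; intros i -> Hi Bi Pki.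
  assert (Li : in_len M i) by (apply (in_len_le i j0); [exact Lj0 | lia]).
  destruct (Hbox i (proj1 Hi) Li Bi)
    as [(l & Hil & _ & _ & (Pl & LSl & QSl) & Pil) | (p & _ & [])].
  assert (Pkl : forall p, k <= p <= l -> P p).
  { intros p Hp.
    destruct (lt_dec p i); [apply Pki; lia |].
    destruct (Nat.eq_dec p l) as [-> | Hne]; [exact Pl | apply Pil; lia]. }
  destruct (le_lt_dec j0 (S l)) as [Hj0l | Hlj0].
  - exists j0; repeat split; auto.
    intros p Hp; apply Pkl; lia.
  - destruct (classic (B (tau M (S l) - tau M k))) as [BSl | nBSl].
    + apply (IH (j0 - S l)) with (i := S l); auto; try lia.
      intros p Hp; apply Pkl; lia.
    + exists (S l); repeat split; auto; try lia.
      * apply (proj2 HIB) with (tau M j0 - tau M k); auto.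
        pose proof (tau_le (S l) j0 Lj0); lia.
      * intros p Hp; apply Pkl; lia.
Qed.

Lemma until_split P Q k :
  in_len M k ->
  until_at M I P Q k <->
  eventually_at M I Q k /\
  always_at M B (until_at M (in_itv itv_all) P (and_next M P Q)) k.
Proof.
  intro Lk; split.
  - intros (j & Hkj & Lj & Ij & Qj & Pj); split.
    + exists j; repeat split; auto.
    + intros j' Hkj' Lj' Bj'; left.
      assert (Hj'j : j' < j).
      { destruct (le_lt_dec j j') as [Hjj' | ]; auto.
        exfalso; apply (proj1 HIB _ Ij).
        apply (HB _ (tau M j' - tau M k)); auto.
        pose proof (tau_le j j' Lj' Hjj'); lia. }
      destruct j as [| l]; [lia |].
      exists l; split; [lia |]; split; [apply (in_len_le l (S l)); auto |].
      split; [apply in_itv_all |].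
      split; [split; [apply Pj; lia | auto] |].
      intros; apply Pj; lia.
  - intros ((j0 & Hkj0 & Lj0 & Ij0 & Qj0 & _) & Hbox).
    apply (until_of_always_until P Q k j0 Hkj0 Lj0 Ij0 Qj0 Hbox k); [lia | | lia].
    now rewrite Nat.sub_diag.
Qed.

Lemma release_split P Q k :
  in_len M k ->
  release_at M I P Q k <->
  always_at M I Q k \/
  eventually_at M B (release_at M (in_itv itv_all) P (or_wnext M P Q)) k.
Proof.
  intro Lk.
  rewrite release_not_until, always_not_eventually, (eventually_not_always B),
    until_split by exact Lk.
  rewrite (always_at_ext _ _
             (fun i => ~ release_at M (in_itv itv_all) P (or_wnext M P Q) i))
    by (intros; symmetry; apply not_release_or_wnext).
  destruct (classic (eventually_at M I (fun i => ~ Q i) k)); tauto.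
Qed.

End BoundedUntil.

Lemma until_split0_closed I P Q k :
  lower_set I -> in_len M k ->
  until_at M I P Q k <-> eventually_at M I Q k /\ until_at M (in_itv itv_all) P Q k.
Proof.
  intros HI Lk; split.
  - intros (j & Hkj & Lj & Ij & Qj & Pj); split.
    + exists j; repeat split; auto.
    + exists j; split; [lia |]; split; [exact Lj |]; split; [apply in_itv_all | auto].
  - intros ((j0 & Hkj0 & Lj0 & Ij0 & Qj0 & _) & (j1 & Hkj1 & Lj1 & _ & Qj1 & Pj1)).
    destruct (le_lt_dec j1 j0).
    + exists j1; repeat split; auto.
      apply (HI _ (tau M j0 - tau M k)); auto.
      pose proof (tau_le j1 j0 Lj0); lia.
    + exists j0; repeat split; auto.
      intros; apply Pj1; lia.
Qed.

Lemma until_split0_open I P Q k :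
  adjoins (fun d => d = 0) I -> in_len M k ->
  until_at M I P Q k <->
  eventually_at M I Q k /\ until_at M (in_itv itv_all) P (and_next M P Q) k.
Proof.
  intros HI Lk.
  rewrite (until_split I (fun d => d = 0)), always_at_zero
    by (auto || (intros d d'; lia)).
  reflexivity.
Qed.

Lemma release_split0_closed I P Q k :
  lower_set I -> in_len M k ->
  release_at M I P Q k <-> always_at M I Q k \/ release_at M (in_itv itv_all) P Q k.
Proof.
  intros HI Lk.
  rewrite !release_not_until, always_not_eventually, until_split0_closed by auto.
  destruct (classic (eventually_at M I (fun i => ~ Q i) k)); tauto.
Qed.

Lemma release_split0_open I P Q k :
  adjoins (fun d => d = 0) I -> in_len M k ->
  release_at M I P Q k <->
  always_at M I Q k \/ release_at M (in_itv itv_all) P (or_wnext M P Q) k.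
Proof.
  intros HI Lk.
  rewrite release_not_until, always_not_eventually, until_split0_open,
    <- not_release_or_wnext by auto.
  destruct (classic (eventually_at M I (fun i => ~ Q i) k)); tauto.
Qed.

End Timeline.

Definition rev_trace {A} (M : trace A) (k : nat) : trace A :=
  Trace (Some (S k)) (fun i => Hs M (k - i)) (fun i => Ts M (k - i))
    (fun i => tau M k - tau M (k - i)).

Section Reversal.
Context {A : Type} (M : trace A) (HM : tau_increasing M) (k : nat) (Lk : in_len M k).

Local Notation M' := (rev_trace M k).

Lemma in_len_rev i : in_len M' i <-> i <= k.
Proof. unfold in_len; simpl; lia. Qed.

Lemma tau_increasing_rev : tau_increasing M'.
Proof.
  intros i Hi; apply in_len_rev in Hi; simpl.
  assert (Hstep : S (k - S i) = k - i) by lia.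
  pose proof (HM (k - S i) ltac:(rewrite Hstep; apply (in_len_le M _ k Lk); lia)).
  rewrite Hstep in *.
  pose proof (tau_le M HM (k - i) k Lk ltac:(lia)); lia.
Qed.

Lemma in_len_rev_0 : in_len M' 0.
Proof. apply in_len_rev; lia. Qed.

Lemma rev_delay j j' : j' <= j <= k ->
  tau M' (k - j') - tau M' (k - j) = tau M j - tau M j'.
Proof.
  intro H; simpl.
  replace (k - (k - j')) with j' by lia; replace (k - (k - j)) with j by lia.
  pose proof (tau_le M HM j k Lk ltac:(lia)).
  pose proof (tau_le M HM j' j (in_len_le M j k Lk ltac:(lia)) ltac:(lia)); lia.
Qed.

Lemma since_at_rev I P Q j : j <= k ->
  since_at M I P Q j <->
  until_at M' I (fun i => P (k - i)) (fun i => Q (k - i)) (k - j).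
Proof.
  intro Hjk; split.
  - intros (j' & Hj' & Ij' & Qj' & Pj').
    exists (k - j'); repeat split; try (apply in_len_rev); try lia.
    + now rewrite rev_delay by lia.
    + now replace (k - (k - j')) with j' by lia.
    + intros i Hi; apply Pj'; lia.
  - intros (r & Hr & Lr & Ir & Qr & Pr); apply in_len_rev in Lr.
    exists (k - r); repeat split; try lia.
    + replace r with (k - (k - r)) in Ir by lia.
      now rewrite rev_delay in Ir by lia.
    + exact Qr.
    + intros i Hi.
      replace i with (k - (k - i)) by lia; apply Pr; lia.
Qed.

Lemma trigger_at_rev I P Q j : j <= k ->
  trigger_at M I P Q j <->
  release_at M' I (fun i => P (k - i)) (fun i => Q (k - i)) (k - j).
Proof.
  intro Hjk; split.
  - intros H r Hr Lr Ir; apply in_len_rev in Lr.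
    replace r with (k - (k - r)) in Ir by lia.
    rewrite rev_delay in Ir by lia.
    destruct (H (k - r) ltac:(lia) Ir) as [Qr | (i & Hi & Pi)]; [now left | right].
    exists (k - i); split; [lia |].
    now replace (k - (k - i)) with i by lia.
  - intros H j' Hj' Ij'.
    rewrite <- rev_delay in Ij' by lia.
    destruct (H (k - j') ltac:(lia) (proj2 (in_len_rev (k - j')) ltac:(lia)) Ij')
      as [Qj' | (r & Hr & Pr)].
    + left; now replace j' with (k - (k - j')) by lia.
    + right; exists (k - r); split; [lia | exact Pr].
Qed.

Lemma since_and_prev_rev P Q j : j <= k ->
  since_at M (in_itv itv_all) P (and_prev P Q) j <->
  until_at M' (in_itv itv_all) (fun i => P (k - i))
    (and_next M' (fun i => P (k - i)) (fun i => Q (k - i))) (k - j).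
Proof.
  intro Hjk; rewrite since_at_rev by exact Hjk.
  apply until_at_ext; [tauto |].
  intros l _; unfold and_prev, and_next; rewrite in_len_rev.
  replace (k - l - 1) with (k - S l) by lia.
  split; intros (? & ? & ?); repeat split; auto; lia.
Qed.

Lemma trigger_or_wprev_rev P Q j : j <= k ->
  trigger_at M (in_itv itv_all) P (or_wprev P Q) j <->
  release_at M' (in_itv itv_all) (fun i => P (k - i))
    (or_wnext M' (fun i => P (k - i)) (fun i => Q (k - i))) (k - j).
Proof.
  intro Hjk; rewrite trigger_at_rev by exact Hjk.
  apply release_at_ext; [tauto |].
  intros l _; unfold or_wprev, or_wnext; rewrite in_len_rev.
  replace (k - l - 1) with (k - S l) by lia.
  split; (intros [? | H]; [now left | right]); intro; apply H; lia.
Qed.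

Section BoundedSince.
Variables (I B : nat -> Prop).
Hypothesis (B0 : B 0) (HB : lower_set B) (HIB : adjoins B I).

Lemma since_split P Q :
  since_at M I P Q k <->
  once_at M I Q k /\
  historically_at M B (since_at M (in_itv itv_all) P (and_prev P Q)) k.
Proof.
  unfold once_at, historically_at.
  rewrite !since_at_rev, trigger_at_rev, Nat.sub_diag by lia.
  rewrite (until_split M' tau_increasing_rev I B) by auto using in_len_rev_0.
  apply and_iff_compat_l, always_at_ext; intros i Hi; apply in_len_rev in Hi.
  rewrite since_and_prev_rev by lia.
  now replace (k - (k - i)) with i by lia.
Qed.

Lemma trigger_split P Q :
  trigger_at M I P Q k <->
  historically_at M I Q k \/
  once_at M B (trigger_at M (in_itv itv_all) P (or_wprev P Q)) k.
Proof.
  unfold once_at, historically_at.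
  rewrite !trigger_at_rev, since_at_rev, Nat.sub_diag by lia.
  rewrite (release_split M' tau_increasing_rev I B) by auto using in_len_rev_0.
  apply or_iff_compat_l, eventually_at_ext; intros i Hi; apply in_len_rev in Hi.
  rewrite trigger_or_wprev_rev by lia.
  now replace (k - (k - i)) with i by lia.
Qed.

End BoundedSince.

Lemma since_split0_closed I P Q :
  lower_set I ->
  since_at M I P Q k <-> once_at M I Q k /\ since_at M (in_itv itv_all) P Q k.
Proof.
  intro HI; unfold once_at.
  rewrite !since_at_rev, Nat.sub_diag by lia.
  apply until_split0_closed; auto using tau_increasing_rev, in_len_rev_0.
Qed.

Lemma since_split0_open I P Q :
  adjoins (fun d => d = 0) I ->
  since_at M I P Q k <->
  once_at M I Q k /\ since_at M (in_itv itv_all) P (and_prev P Q) k.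
Proof.
  intro HI; unfold once_at.
  rewrite since_and_prev_rev, !since_at_rev, Nat.sub_diag by lia.
  apply until_split0_open; auto using tau_increasing_rev, in_len_rev_0.
Qed.

Lemma trigger_split0_closed I P Q :
  lower_set I ->
  trigger_at M I P Q k <->
  historically_at M I Q k \/ trigger_at M (in_itv itv_all) P Q k.
Proof.
  intro HI; unfold historically_at.
  rewrite !trigger_at_rev, Nat.sub_diag by lia.
  apply release_split0_closed; auto using tau_increasing_rev, in_len_rev_0.
Qed.

Lemma trigger_split0_open I P Q :
  adjoins (fun d => d = 0) I ->
  trigger_at M I P Q k <->
  historically_at M I Q k \/ trigger_at M (in_itv itv_all) P (or_wprev P Q) k.
Proof.
  intro HI; unfold historically_at.
  rewrite trigger_or_wprev_rev, !trigger_at_rev, Nat.sub_diag by lia.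
  apply release_split0_open; auto using tau_increasing_rev, in_len_rev_0.
Qed.

End Reversal.

Lemma sat_Iff_intro {A} (M : trace A) k (f g : formula A) :
  (forall b, sat b M k f <-> sat b M k g) -> sat true M k (Iff f g).
Proof.
  intro H; unfold Iff; cbn [sat].
  destruct (H true), (H false).
  destruct (classic (sat true M k f)), (classic (sat false M k f)); tauto.
Qed.

Section Satisfaction.
Context {A : Type} (b : bool) (M : trace A).

Local Notation sats f := (fun i => sat b M i f).

Lemma sat_And k (f g : formula A) : sat b M k (And f g) <-> sat b M k f /\ sat b M k g.
Proof. reflexivity. Qed.

Lemma sat_Or k (f g : formula A) : sat b M k (Or f g) <-> sat b M k f \/ sat b M k g.
Proof. reflexivity. Qed.

Lemma sat_Until I f g k :
  sat b M k (Until I f g) <-> until_at M (in_itv I) (sats f) (sats g) k.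
Proof. reflexivity. Qed.

Lemma sat_Release I f g k :
  sat b M k (Release I f g) <-> release_at M (in_itv I) (sats f) (sats g) k.
Proof. reflexivity. Qed.

Lemma sat_Since I f g k :
  sat b M k (Since I f g) <-> since_at M (in_itv I) (sats f) (sats g) k.
Proof. reflexivity. Qed.

Lemma sat_Trigger I f g k :
  sat b M k (Trigger I f g) <-> trigger_at M (in_itv I) (sats f) (sats g) k.
Proof. reflexivity. Qed.

Lemma sat_Eventually I g k :
  sat b M k (Eventually I g) <-> eventually_at M (in_itv I) (sats g) k.
Proof. apply until_at_ext; intros; cbn; tauto. Qed.

Lemma sat_Always I g k : sat b M k (Always I g) <-> always_at M (in_itv I) (sats g) k.
Proof. reflexivity. Qed.

Lemma sat_EventuallyBefore I g k :
  sat b M k (EventuallyBefore I g) <-> once_at M (in_itv I) (sats g) k.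
Proof. apply since_at_ext; intros; cbn; tauto. Qed.

Lemma sat_AlwaysBefore I g k :
  sat b M k (AlwaysBefore I g) <-> historically_at M (in_itv I) (sats g) k.
Proof. reflexivity. Qed.

Lemma sat_and_Next f g l :
  sat b M l (And f (Next itv_all g)) <-> and_next M (sats f) (sats g) l.
Proof.
  unfold and_next; cbn [sat].
  pose proof (in_itv_all (tau M (S l) - tau M l)); tauto.
Qed.

Lemma sat_or_WNext f g l :
  sat b M l (Or f (WNext itv_all g)) <-> or_wnext M (sats f) (sats g) l.
Proof.
  unfold or_wnext, WNext, Top, Neg; cbn [sat].
  pose proof (in_itv_all (tau M (S l) - tau M l)).
  destruct (classic (in_len M (S l))); tauto.
Qed.

Lemma sat_and_Prev f g l :
  sat b M l (And f (Prev itv_all g)) <-> and_prev (sats f) (sats g) l.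
Proof.
  unfold and_prev; cbn [sat].
  pose proof (in_itv_all (tau M l - tau M (l - 1))); tauto.
Qed.

Lemma sat_or_WPrev f g l :
  sat b M l (Or f (WPrev itv_all g)) <-> or_wprev (sats f) (sats g) l.
Proof.
  unfold or_wprev, WPrev, Top, Neg; cbn [sat].
  pose proof (in_itv_all (tau M l - tau M (l - 1))).
  destruct (classic (0 < l)); tauto.
Qed.

End Satisfaction.

Section Equivalences.
Context {A : Type} (phi psi : formula A).

Lemma mht_until_split I B :
  in_itv B 0 -> lower_set (in_itv B) -> adjoins (in_itv B) (in_itv I) ->
  mht_equiv (Until I phi psi)
    (And (Eventually I psi) (Always B (Until itv_all phi (And phi (Next itv_all psi))))).
Proof.
  intros B0 HB HIB M HM k Lk; apply sat_Iff_intro; intro b.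
  apply strict_trace_tau_increasing in HM.
  rewrite sat_Until, (until_split M HM _ _ B0 HB HIB) by exact Lk.
  rewrite sat_And, sat_Eventually, sat_Always.
  apply and_iff_compat_l, always_at_ext; intros j _; cbv beta.
  rewrite sat_Until; apply until_at_ext; [tauto | intros; symmetry; apply sat_and_Next].
Qed.

Lemma mht_until_split0_closed I :
  lower_set (in_itv I) ->
  mht_equiv (Until I phi psi) (And (Eventually I psi) (Until itv_all phi psi)).
Proof.
  intros HI M HM k Lk; apply sat_Iff_intro; intro b.
  apply strict_trace_tau_increasing in HM.
  rewrite sat_Until, (until_split0_closed M HM) by assumption.
  rewrite sat_And, sat_Eventually; reflexivity.
Qed.

Lemma mht_until_split0_open I :
  adjoins (fun d => d = 0) (in_itv I) ->
  mht_equiv (Until I phi psi)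
    (And (Eventually I psi) (Until itv_all phi (And phi (Next itv_all psi)))).
Proof.
  intros HI M HM k Lk; apply sat_Iff_intro; intro b.
  apply strict_trace_tau_increasing in HM.
  rewrite sat_Until, (until_split0_open M HM) by assumption.
  rewrite sat_And, sat_Eventually, sat_Until.
  apply and_iff_compat_l, until_at_ext; [tauto | intros; symmetry; apply sat_and_Next].
Qed.

Lemma mht_release_split I B :
  in_itv B 0 -> lower_set (in_itv B) -> adjoins (in_itv B) (in_itv I) ->
  mht_equiv (Release I phi psi)
    (Or (Always I psi) (Eventually B (Release itv_all phi (Or phi (WNext itv_all psi))))).
Proof.
  intros B0 HB HIB M HM k Lk; apply sat_Iff_intro; intro b.
  apply strict_trace_tau_increasing in HM.
  rewrite sat_Release, (release_split M HM _ _ B0 HB HIB) by exact Lk.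
  rewrite sat_Or, sat_Always, sat_Eventually.
  apply or_iff_compat_l, eventually_at_ext; intros j _; cbv beta.
  rewrite sat_Release; apply release_at_ext; [tauto | intros; symmetry; apply sat_or_WNext].
Qed.

Lemma mht_release_split0_closed I :
  lower_set (in_itv I) ->
  mht_equiv (Release I phi psi) (Or (Always I psi) (Release itv_all phi psi)).
Proof.
  intros HI M HM k Lk; apply sat_Iff_intro; intro b.
  apply strict_trace_tau_increasing in HM.
  rewrite sat_Release, (release_split0_closed M HM) by assumption.
  rewrite sat_Or, sat_Always; reflexivity.
Qed.

Lemma mht_release_split0_open I :
  adjoins (fun d => d = 0) (in_itv I) ->
  mht_equiv (Release I phi psi)
    (Or (Always I psi) (Release itv_all phi (Or phi (WNext itv_all psi)))).
Proof.
  intros HI M HM k Lk; apply sat_Iff_intro; intro b.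
  apply strict_trace_tau_increasing in HM.
  rewrite sat_Release, (release_split0_open M HM) by assumption.
  rewrite sat_Or, sat_Always, sat_Release.
  apply or_iff_compat_l, release_at_ext; [tauto | intros; symmetry; apply sat_or_WNext].
Qed.

Lemma mht_since_split I B :
  in_itv B 0 -> lower_set (in_itv B) -> adjoins (in_itv B) (in_itv I) ->
  mht_equiv (Since I phi psi)
    (And (EventuallyBefore I psi)
         (AlwaysBefore B (Since itv_all phi (And phi (Prev itv_all psi))))).
Proof.
  intros B0 HB HIB M HM k Lk; apply sat_Iff_intro; intro b.
  apply strict_trace_tau_increasing in HM.
  rewrite sat_Since, (since_split M HM k Lk _ _ B0 HB HIB).
  rewrite sat_And, sat_EventuallyBefore, sat_AlwaysBefore.
  apply and_iff_compat_l, trigger_at_ext; [tauto | intro j; cbv beta].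
  rewrite sat_Since; apply since_at_ext; [tauto | intro; symmetry; apply sat_and_Prev].
Qed.

Lemma mht_since_split0_closed I :
  lower_set (in_itv I) ->
  mht_equiv (Since I phi psi) (And (EventuallyBefore I psi) (Since itv_all phi psi)).
Proof.
  intros HI M HM k Lk; apply sat_Iff_intro; intro b.
  apply strict_trace_tau_increasing in HM.
  rewrite sat_Since, (since_split0_closed M HM k Lk) by assumption.
  rewrite sat_And, sat_EventuallyBefore; reflexivity.
Qed.

Lemma mht_since_split0_open I :
  adjoins (fun d => d = 0) (in_itv I) ->
  mht_equiv (Since I phi psi)
    (And (EventuallyBefore I psi) (Since itv_all phi (And phi (Prev itv_all psi)))).
Proof.
  intros HI M HM k Lk; apply sat_Iff_intro; intro b.
  apply strict_trace_tau_increasing in HM.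
  rewrite sat_Since, (since_split0_open M HM k Lk) by assumption.
  rewrite sat_And, sat_EventuallyBefore, sat_Since.
  apply and_iff_compat_l, since_at_ext; [tauto | intro; symmetry; apply sat_and_Prev].
Qed.

Lemma mht_trigger_split I B :
  in_itv B 0 -> lower_set (in_itv B) -> adjoins (in_itv B) (in_itv I) ->
  mht_equiv (Trigger I phi psi)
    (Or (AlwaysBefore I psi)
        (EventuallyBefore B (Trigger itv_all phi (Or phi (WPrev itv_all psi))))).
Proof.
  intros B0 HB HIB M HM k Lk; apply sat_Iff_intro; intro b.
  apply strict_trace_tau_increasing in HM.
  rewrite sat_Trigger, (trigger_split M HM k Lk _ _ B0 HB HIB).
  rewrite sat_Or, sat_AlwaysBefore, sat_EventuallyBefore.
  apply or_iff_compat_l, since_at_ext; [tauto | intro j; cbv beta].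
  rewrite sat_Trigger; apply trigger_at_ext; [tauto | intro; symmetry; apply sat_or_WPrev].
Qed.

Lemma mht_trigger_split0_closed I :
  lower_set (in_itv I) ->
  mht_equiv (Trigger I phi psi) (Or (AlwaysBefore I psi) (Trigger itv_all phi psi)).
Proof.
  intros HI M HM k Lk; apply sat_Iff_intro; intro b.
  apply strict_trace_tau_increasing in HM.
  rewrite sat_Trigger, (trigger_split0_closed M HM k Lk) by assumption.
  rewrite sat_Or, sat_AlwaysBefore; reflexivity.
Qed.

Lemma mht_trigger_split0_open I :
  adjoins (fun d => d = 0) (in_itv I) ->
  mht_equiv (Trigger I phi psi)
    (Or (AlwaysBefore I psi) (Trigger itv_all phi (Or phi (WPrev itv_all psi)))).
Proof.
  intros HI M HM k Lk; apply sat_Iff_intro; intro b.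
  apply strict_trace_tau_increasing in HM.
  rewrite sat_Trigger, (trigger_split0_open M HM k Lk) by assumption.
  rewrite sat_Or, sat_AlwaysBefore, sat_Trigger.
  apply or_iff_compat_l, trigger_at_ext; [tauto | intro; symmetry; apply sat_or_WPrev].
Qed.

End Equivalences.

Theorem proposition10 (A : Type) (phi psi : formula A) (m n : nat) (Hm : 0 < m) :
  (* Until, m > 0 *)
  mht_equiv (Until (itv_co m n) phi psi)
    (And (Eventually (itv_co m n) psi)
         (Always (itv_co 0 m) (Until itv_all phi (And phi (Next itv_all psi))))) /\
  mht_equiv (Until (itv_cc m n) phi psi)
    (And (Eventually (itv_cc m n) psi)
         (Always (itv_co 0 m) (Until itv_all phi (And phi (Next itv_all psi))))) /\
  mht_equiv (Until (itv_oo m n) phi psi)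
    (And (Eventually (itv_oo m n) psi)
         (Always (itv_cc 0 m) (Until itv_all phi (And phi (Next itv_all psi))))) /\
  mht_equiv (Until (itv_oc m n) phi psi)
    (And (Eventually (itv_oc m n) psi)
         (Always (itv_cc 0 m) (Until itv_all phi (And phi (Next itv_all psi))))) /\
  (* Until, lower bound 0 *)
  mht_equiv (Until (itv_co 0 n) phi psi)
    (And (Eventually (itv_co 0 n) psi) (Until itv_all phi psi)) /\
  mht_equiv (Until (itv_cc 0 n) phi psi)
    (And (Eventually (itv_cc 0 n) psi) (Until itv_all phi psi)) /\
  mht_equiv (Until (itv_oo 0 n) phi psi)
    (And (Eventually (itv_oo 0 n) psi) (Until itv_all phi (And phi (Next itv_all psi)))) /\
  mht_equiv (Until (itv_oc 0 n) phi psi)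
    (And (Eventually (itv_oc 0 n) psi) (Until itv_all phi (And phi (Next itv_all psi)))) /\
  (* Release, m > 0 *)
  mht_equiv (Release (itv_co m n) phi psi)
    (Or (Always (itv_co m n) psi)
        (Eventually (itv_co 0 m) (Release itv_all phi (Or phi (WNext itv_all psi))))) /\
  mht_equiv (Release (itv_cc m n) phi psi)
    (Or (Always (itv_cc m n) psi)
        (Eventually (itv_co 0 m) (Release itv_all phi (Or phi (WNext itv_all psi))))) /\
  mht_equiv (Release (itv_oo m n) phi psi)
    (Or (Always (itv_oo m n) psi)
        (Eventually (itv_cc 0 m) (Release itv_all phi (Or phi (WNext itv_all psi))))) /\
  mht_equiv (Release (itv_oc m n) phi psi)
    (Or (Always (itv_oc m n) psi)
        (Eventually (itv_cc 0 m) (Release itv_all phi (Or phi (WNext itv_all psi))))) /\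
  (* Release, lower bound 0 *)
  mht_equiv (Release (itv_co 0 n) phi psi)
    (Or (Always (itv_co 0 n) psi) (Release itv_all phi psi)) /\
  mht_equiv (Release (itv_cc 0 n) phi psi)
    (Or (Always (itv_cc 0 n) psi) (Release itv_all phi psi)) /\
  mht_equiv (Release (itv_oo 0 n) phi psi)
    (Or (Always (itv_oo 0 n) psi) (Release itv_all phi (Or phi (WNext itv_all psi)))) /\
  mht_equiv (Release (itv_oc 0 n) phi psi)
    (Or (Always (itv_oc 0 n) psi) (Release itv_all phi (Or phi (WNext itv_all psi)))) /\
  (* Since, m > 0 *)
  mht_equiv (Since (itv_co m n) phi psi)
    (And (EventuallyBefore (itv_co m n) psi)
         (AlwaysBefore (itv_co 0 m) (Since itv_all phi (And phi (Prev itv_all psi))))) /\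
  mht_equiv (Since (itv_cc m n) phi psi)
    (And (EventuallyBefore (itv_cc m n) psi)
         (AlwaysBefore (itv_co 0 m) (Since itv_all phi (And phi (Prev itv_all psi))))) /\
  mht_equiv (Since (itv_oo m n) phi psi)
    (And (EventuallyBefore (itv_oo m n) psi)
         (AlwaysBefore (itv_cc 0 m) (Since itv_all phi (And phi (Prev itv_all psi))))) /\
  mht_equiv (Since (itv_oc m n) phi psi)
    (And (EventuallyBefore (itv_oc m n) psi)
         (AlwaysBefore (itv_cc 0 m) (Since itv_all phi (And phi (Prev itv_all psi))))) /\
  (* Since, lower bound 0 *)
  mht_equiv (Since (itv_co 0 n) phi psi)
    (And (EventuallyBefore (itv_co 0 n) psi) (Since itv_all phi psi)) /\
  mht_equiv (Since (itv_cc 0 n) phi psi)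
    (And (EventuallyBefore (itv_cc 0 n) psi) (Since itv_all phi psi)) /\
  mht_equiv (Since (itv_oo 0 n) phi psi)
    (And (EventuallyBefore (itv_oo 0 n) psi) (Since itv_all phi (And phi (Prev itv_all psi)))) /\
  mht_equiv (Since (itv_oc 0 n) phi psi)
    (And (EventuallyBefore (itv_oc 0 n) psi) (Since itv_all phi (And phi (Prev itv_all psi)))) /\
  (* Trigger, m > 0 *)
  mht_equiv (Trigger (itv_co m n) phi psi)
    (Or (AlwaysBefore (itv_co m n) psi)
        (EventuallyBefore (itv_co 0 m) (Trigger itv_all phi (Or phi (WPrev itv_all psi))))) /\
  mht_equiv (Trigger (itv_cc m n) phi psi)
    (Or (AlwaysBefore (itv_cc m n) psi)
        (EventuallyBefore (itv_co 0 m) (Trigger itv_all phi (Or phi (WPrev itv_all psi))))) /\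
  mht_equiv (Trigger (itv_oo m n) phi psi)
    (Or (AlwaysBefore (itv_oo m n) psi)
        (EventuallyBefore (itv_cc 0 m) (Trigger itv_all phi (Or phi (WPrev itv_all psi))))) /\
  mht_equiv (Trigger (itv_oc m n) phi psi)
    (Or (AlwaysBefore (itv_oc m n) psi)
        (EventuallyBefore (itv_cc 0 m) (Trigger itv_all phi (Or phi (WPrev itv_all psi))))) /\
  (* Trigger, lower bound 0 *)
  mht_equiv (Trigger (itv_co 0 n) phi psi)
    (Or (AlwaysBefore (itv_co 0 n) psi) (Trigger itv_all phi psi)) /\
  mht_equiv (Trigger (itv_cc 0 n) phi psi)
    (Or (AlwaysBefore (itv_cc 0 n) psi) (Trigger itv_all phi psi)) /\
  mht_equiv (Trigger (itv_oo 0 n) phi psi)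
    (Or (AlwaysBefore (itv_oo 0 n) psi) (Trigger itv_all phi (Or phi (WPrev itv_all psi)))) /\
  mht_equiv (Trigger (itv_oc 0 n) phi psi)
    (Or (AlwaysBefore (itv_oc 0 n) psi) (Trigger itv_all phi (Or phi (WPrev itv_all psi)))).
Proof.
  repeat match goal with |- _ /\ _ => split end.
  all: first
    [ apply mht_until_split | apply mht_until_split0_closed
    | apply mht_until_split0_open
    | apply mht_release_split | apply mht_release_split0_closed
    | apply mht_release_split0_open
    | apply mht_since_split | apply mht_since_split0_closed
    | apply mht_since_split0_open
    | apply mht_trigger_split | apply mht_trigger_split0_closed
    | apply mht_trigger_split0_open ].
  all: unfold lower_set, adjoins, in_itv; cbn; repeat split; intros; lia.
Qed.
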